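(* For every $1$-Sperner hypergraph ${\cal H}=(V,{\cal E})$ with ${\cal E}\neq\{\emptyset\}$, the characteristic vectors $\chi^e\in\mathbb{R}^V$ ($e\in{\cal E}$) of its hyperedges are linearly independent.
   Context: A hypergraph ${\cal H}=(V,{\cal E})$ consists of a finite vertex set $V$ and a set ${\cal E}$ of subsets of $V$. It is $1$-Sperner if every two distinct hyperedges $e,f$ satisfy $\min\{|e\setminus f|,|f\setminus e|\}=1$. The characteristic vector $\chi^e\in\{0,1\}^V$ of $e$ has $\chi^e_v=1$ iff $v\in e$. *)

From mathcomp Require Import all_boot all_order all_algebra.
Set Implicit Arguments. Unset Strict Implicit. Unset Printing Implicit Defensive.
Import GRing.Theory Num.Theory.
Local Open Scope ring_scope.

Definition one_sperner (V : finType) (E : {set {set V}}) : Prop :=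
  forall e f, e \in E -> f \in E -> e != f ->
    minn #|e :\: f| #|f :\: e| = 1%N.

Definition chi (R : nzRingType) (V : finType) (e : {set V}) : V -> R :=
  fun v => if v \in e then 1 else 0.

Definition chi_lin_indep (R : nzRingType) (V : finType) (E : {set {set V}}) : Prop :=
  forall c : {set V} -> R,
    (forall v : V, \sum_(e in E) c e * chi R e v = 0) ->
    forall e, e \in E -> c e = 0.

From mathcomp Require Import all_boot all_order all_algebra.
From mathcomp Require Import reals.
From mathcomp Require Import zify.
Set Implicit Arguments. Unset Strict Implicit. Unset Printing Implicit Defensive.
Import GRing.Theory Num.Theory.
Local Open Scope ring_scope.

(* For distinct hyperedges of a 1-Sperner hypergraph, |e ∩ f| = min(|e|, |f|) - 1,
   and for e = f nonempty, |e ∩ e| = 1 + (|e| - 1). Writing min(m, n) - 1 as the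
   number of t >= 2 with t <= m and t <= n, the Gram matrix of the vectors chi^e is
   I + sum_(t >= 2) b_t b_t^T with b_t(e) = [t <= |e|]. It is therefore positive definite:
   |sum_e c_e chi^e|^2 >= sum_e c_e^2, so a vanishing combination has c = 0. *)

Lemma sum_leq_ord (k p : nat) : (\sum_(t < k) (t.+2 <= p) = minn k p.-1)%N.
Proof.
elim: k => [|k IHk]; first by rewrite big_ord0 min0n.
by rewrite big_ord_recr /= IHk; case: (leqP k.+2 p); lia.
Qed.

Lemma predn_minn_sum (k m n : nat) : (m <= k)%N ->
  ((minn m n).-1 = \sum_(t < k) ((t.+2 <= m) && (t.+2 <= n)))%N.
Proof.
move=> le_mk; have : (minn m n <= k)%N by rewrite geq_min le_mk.
under eq_bigr => t _ do rewrite -leq_min.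
by rewrite sum_leq_ord; lia.
Qed.

Lemma one_sperner_card_setI (V : finType) (E : {set {set V}}) (e f : {set V}) :
  one_sperner E -> e \in E -> f \in E -> e != f ->
  #|e :&: f| = (minn #|e| #|f|).-1.
Proof.
move=> HE eE fE neq_ef; have := HE e f eE fE neq_ef.
by have := cardsID f e; have := cardsID e f; rewrite setIC; lia.
Qed.

Lemma set0_notin_one_sperner (V : finType) (E : {set {set V}}) :
  one_sperner E -> E != [set set0] -> set0 \notin E.
Proof.
move=> HE; apply: contra => E0; rewrite eqEsubset sub1set E0 andbT.
apply/subsetP => f fE; rewrite in_set1; apply/eqP/esym/eqP; apply: contraT => neq0f.
by have := HE _ _ E0 fE neq0f; rewrite set0D cards0 min0n.
Qed.

Lemma chiM (R : nzRingType) (V : finType) (e f : {set V}) (v : V) :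
  chi R e v * chi R f v = chi R (e :&: f) v.
Proof. by rewrite /chi inE; case: (v \in e); case: (v \in f); rewrite ?mulr1 ?mulr0. Qed.

Lemma sum_chi (R : nzRingType) (V : finType) (e : {set V}) :
  \sum_v chi R e v = #|e|%:R.
Proof. by rewrite -sum1_card natr_sum [RHS]big_mkcond. Qed.

Lemma one_sperner_gram (R : nzRingType) (V : finType) (E : {set {set V}})
    (e f : {set V}) :
  one_sperner E -> set0 \notin E -> e \in E -> f \in E ->
  \sum_v chi R e v * chi R f v =
  (e == f)%:R + \sum_(t < #|V|) (t.+2 <= #|e|)%:R * (t.+2 <= #|f|)%:R.
Proof.
move=> HE E0 eE fE; under eq_bigr => v _ do rewrite chiM.
under [X in _ + X]eq_bigr => t _ do rewrite -natrM mulnb.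
rewrite sum_chi -natr_sum -natrD -(predn_minn_sum _ (max_card e)).
have [<-|neq_ef] := eqVneq e f; last by rewrite (one_sperner_card_setI HE).
have : e != set0 by apply: contraNneq E0 => <-.
by rewrite -card_gt0 setIid minnn add1n => /prednK ->.
Qed.

Lemma sum_sqr_lincomb (R : comPzRingType) (I J : finType) (P : pred I)
    (c : I -> R) (x : I -> J -> R) :
  \sum_j (\sum_(i | P i) c i * x i j) ^+ 2 =
  \sum_(i | P i) \sum_(k | P k) c i * c k * \sum_j x i j * x k j.
Proof.
under eq_bigr => j _ do rewrite expr2 mulr_suml; rewrite exchange_big.
apply: eq_bigr => i _; under eq_bigr => j _ do rewrite mulr_sumr.
rewrite exchange_big; apply: eq_bigr => k _; rewrite mulr_sumr.
by apply: eq_bigr => j _; rewrite mulrACA.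
Qed.

Lemma sum_sqr_eq0 (R : realDomainType) (I : finType) (P : pred I) (c : I -> R) (s : R) :
  0 <= s -> \sum_(i | P i) c i ^+ 2 + s = 0 -> forall i, P i -> c i = 0.
Proof.
move=> s_ge0 sum0 i Pi; apply/eqP; rewrite -sqrf_eq0; apply/eqP.
have sqr_P_ge0 j : P j -> 0 <= c j ^+ 2 by move=> _; apply: sqr_ge0.
move: sum0 => /eqP; rewrite paddr_eq0 ?sumr_ge0 // => /andP[/eqP sum0 _].
by move/psumr_eq0P: sum0; apply.
Qed.

Theorem proposition15 (R : realType) (V : finType) (E : {set {set V}}) :
  one_sperner E -> E != [set set0] -> chi_lin_indep R E.
Proof.
move=> HE E_ne0 c comb0.
have E0 := set0_notin_one_sperner HE E_ne0.
pose b (e : {set V}) (t : 'I_#|V|) : R := (t.+2 <= #|e|)%:R.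
have quad : \sum_v (\sum_(e in E) c e * chi R e v) ^+ 2 =
    \sum_(e in E) c e ^+ 2 + \sum_t (\sum_(e in E) c e * b e t) ^+ 2.
  rewrite !sum_sqr_lincomb -big_split; apply: eq_bigr => e eE /=.
  under eq_bigr => f fE do rewrite (one_sperner_gram _ HE) // mulrDr.
  rewrite big_split /= (bigD1 e eE) /= eqxx mulr1 big1 ?addr0 ?expr2 // => f /andP[_ neq_fe].
  by rewrite eq_sym (negbTE neq_fe) mulr0.
have sum0 : \sum_(e in E) c e ^+ 2 + \sum_t (\sum_(e in E) c e * b e t) ^+ 2 = 0.
  by rewrite -quad big1 // => v _; rewrite comb0 expr0n.
by apply: sum_sqr_eq0 sum0; apply: sumr_ge0 => t _; apply: sqr_ge0.
Qed.
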